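(* Let $F\in\Gamma_0^s(\mathbb{R}_+)$ and $a\in(0,1]$, and suppose that $D:=\hat F^a$ is a metric on $[0,+\infty)$. Then there exists $c>0$ such that $F(s)>c|s^a-1|^{1/a}$ for every $s\ge0$, $s\neq1$, and $D$ is a complete metric on $[0,+\infty)$.
   Context: $\Gamma_0(\mathbb{R}_+)$ is the set of functions $F:[0,\infty)\to[0,\infty]$ that are convex, lower semicontinuous, with $F(1)=0$. For $F\in\Gamma_0(\mathbb{R}_+)$: $\mathrm{rec}(F)(r)=\lim_{\alpha\to\infty}F(1+\alpha r)/\alpha$, $F'_\infty:=\mathrm{rec}(F)(1)$; the perspective function is $\hat F(r,t)=tF(r/t)$ for $t>0$, $\hat F(r,0)=\mathrm{rec}(F)(r)$; the reverse entropy is $R(s)=sF(1/s)$ for $s>0$, $R(0)=F'_\infty$. $\Gamma_0^s(\mathbb{R}_+)$ is the set of $F\in\Gamma_0(\mathbb{R}_+)$ with $F=R$; for such $F$, $\hat F$ is symmetric and $\hat F(1,t)=F(t)$. A metric on $[0,\infty)$ is a function $D:[0,\infty)^2\to[0,\infty)$ (finite-valued) with $D(x,y)=0\iff x=y$, symmetric, satisfying the triangle inequality. *)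

From Stdlib Require Import Reals Lra ClassicalEpsilon.
Open Scope R_scope.

(* Extended nonnegative reals [0, +oo] (values of F). *)
Inductive ERbar : Type := ER (x : R) | ERinf.

Definition er_le (x y : ERbar) : Prop :=
  match x, y with
  | _, ERinf => True
  | ERinf, ER _ => False
  | ER a, ER b => a <= b
  end.

Definition er_lt (x y : ERbar) : Prop :=
  match x, y with
  | ER _, ERinf => True
  | ERinf, _ => False
  | ER a, ER b => a < b
  end.

Definition er_add (x y : ERbar) : ERbar :=
  match x, y with
  | ER a, ER b => ER (a + b)
  | _, _ => ERinf
  end.

(* scalar multiplication by a nonnegative real, with 0 * oo = 0 *)
Definition er_scal (t : R) (x : ERbar) : ERbar :=
  match x with
  | ER a => ER (t * a)
  | ERinf => if Req_EM_T t 0 then ER 0 else ERinf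
  end.

Definition er_fin (x : ERbar) : Prop :=
  match x with ER _ => True | ERinf => False end.

Definition er_val (x : ERbar) : R :=
  match x with ER a => a | ERinf => 0 end.

(* F is in Gamma_0(R_+): [0,oo)-> [0,oo], convex, lsc, F(1)=0.
   Only the values of F on [0,oo) are relevant. *)
Definition Gamma0 (F : R -> ERbar) : Prop :=
  (forall x, 0 <= x -> er_le (ER 0) (F x)) /\
  (forall x y l, 0 <= x -> 0 <= y -> 0 <= l <= 1 ->
     er_le (F (l * x + (1 - l) * y))
           (er_add (er_scal l (F x)) (er_scal (1 - l) (F y)))) /\
  (forall x r, 0 <= x -> er_lt (ER r) (F x) ->
     exists d, 0 < d /\ forall y, 0 <= y -> Rabs (y - x) < d -> er_lt (ER r) (F y)) /\
  F 1 = ER 0.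

Definition er_lim_infty (g : R -> ERbar) (l : ERbar) : Prop :=
  match l with
  | ER L => forall eps, 0 < eps -> exists M, forall al, M < al ->
              exists v, g al = ER v /\ Rabs (v - L) < eps
  | ERinf => forall K, exists M, forall al, M < al -> er_lt (ER K) (g al)
  end.

(* rec(F)(r) = lim_{alpha -> oo} F(1 + alpha r) / alpha *)
Definition recF (F : R -> ERbar) (r : R) : ERbar :=
  epsilon (inhabits ERinf)
    (fun l => er_lim_infty (fun al => er_scal (/ al) (F (1 + al * r))) l).

Definition Finf' (F : R -> ERbar) : ERbar := recF F 1.

Definition hatF (F : R -> ERbar) (r t : R) : ERbar :=
  if Rlt_dec 0 t then er_scal t (F (r / t)) else recF F r.

Definition revF (F : R -> ERbar) (s : R) : ERbar :=
  if Rlt_dec 0 s then er_scal s (F (/ s)) else Finf' F.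

Definition Gamma0s (F : R -> ERbar) : Prop :=
  Gamma0 F /\ forall s, 0 <= s -> F s = revF F s.

(* x^a for x >= 0, with 0^a = 0 *)
Definition rpow (x a : R) : R := if Rle_dec x 0 then 0 else Rpower x a.

Definition is_metric_Rplus (D : R -> R -> R) : Prop :=
  (forall x y, 0 <= x -> 0 <= y -> 0 <= D x y) /\
  (forall x y, 0 <= x -> 0 <= y -> (D x y = 0 <-> x = y)) /\
  (forall x y, 0 <= x -> 0 <= y -> D x y = D y x) /\
  (forall x y z, 0 <= x -> 0 <= y -> 0 <= z -> D x z <= D x y + D y z).

Definition complete_Rplus (D : R -> R -> R) : Prop :=
  forall u : nat -> R, (forall n, 0 <= u n) ->
    (forall eps, 0 < eps -> exists N, forall m n, (N <= m)%nat -> (N <= n)%nat ->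
        D (u m) (u n) < eps) ->
    exists l, 0 <= l /\ forall eps, 0 < eps -> exists N, forall n, (N <= n)%nat ->
        D (u n) l < eps.

(* D := hatF^a, as a finite-valued function (meaningful when hatF is finite) *)
Definition Dfun (F : R -> ERbar) (a : R) (x y : R) : R := rpow (er_val (hatF F x y)) a.

From Stdlib Require Import Reals Lra Lia.
Open Scope R_scope.

(* Proof of Theorem 6.  Write f := F on [0,oo) (finite, since F(x) = hatF(x,1)),
   D := hatF^a and P := D(0,1) = f(0)^a.

   1. From hatF(0,s) = s f(0) we get D(0,s) = s^a P, and D(0,1) <> 0 gives P > 0.
   2. The reverse triangle inequality through the point 0 yields the key
      lower bound  P |x^a - y^a| <= D(x,y).  With y = 1 and D(s,1) = f(s)^a
      this gives f(s) >= f(0) |s^a - 1|^(1/a) > (f(0)/2) |s^a - 1|^(1/a).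
   3. Completeness: a D-Cauchy sequence u has (u_n^a) Cauchy in R by step 2,
      with some limit L >= 0; since y |-> y^(1/a) is continuous (locally
      Lipschitz, 1/a >= 1), u_n -> l := L^(1/a) in R.  Finally D(., l) is
      continuous at l: for l = 0 this is D(x,0) = x^a P, and for l > 0 it
      follows from D(x,l) = (l f(x/l))^a together with the convexity bound
      f(t) <= (f(0) + f(2)) |t - 1| on [0,2]. *)

Lemma rpow_pos_eq x a : 0 < x -> rpow x a = Rpower x a.
Proof. intros; unfold rpow; destruct (Rle_dec x 0); [lra | auto]. Qed.

Lemma rpow_le0 x a : x <= 0 -> rpow x a = 0.
Proof. intros; unfold rpow; destruct (Rle_dec x 0); [auto | lra]. Qed.

Lemma Rpower_pos x a : 0 < Rpower x a.
Proof. apply exp_pos. Qed.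

Lemma rpow_gt0 x a : 0 < x -> 0 < rpow x a.
Proof. intros; rewrite rpow_pos_eq; auto; apply Rpower_pos. Qed.

Lemma rpow_ge0 x a : 0 <= rpow x a.
Proof. unfold rpow; destruct (Rle_dec x 0); [lra | left; apply Rpower_pos]. Qed.

Lemma rpow_1 a : rpow 1 a = 1.
Proof. rewrite rpow_pos_eq by lra. unfold Rpower; rewrite ln_1, Rmult_0_r; apply exp_0. Qed.

Lemma rpow_le x y a : 0 < a -> x <= y -> rpow x a <= rpow y a.
Proof.
  intros Ha Hxy. destruct (Rle_dec x 0).
  - rewrite (rpow_le0 x) by auto; apply rpow_ge0.
  - rewrite !rpow_pos_eq by lra; apply Rle_Rpower_l; lra.
Qed.

Lemma rpow_lt x y a : 0 < a -> 0 <= x -> x < y -> rpow x a < rpow y a.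
Proof.
  intros Ha Hx Hxy. destruct (Rle_dec x 0).
  - rewrite (rpow_le0 x) by auto; apply rpow_gt0; lra.
  - rewrite !rpow_pos_eq by lra; apply Rlt_Rpower_l; lra.
Qed.

Lemma rpow_mult x y a : 0 <= x -> 0 <= y -> rpow (x * y) a = rpow x a * rpow y a.
Proof.
  intros Hx Hy. destruct (Req_dec x 0) as [-> |]; [|destruct (Req_dec y 0) as [-> |]].
  - rewrite Rmult_0_l, (rpow_le0 0) by lra; ring.
  - rewrite Rmult_0_r, (rpow_le0 0) by lra; ring.
  - rewrite !rpow_pos_eq by (try apply Rmult_lt_0_compat; lra).
    rewrite Rpower_mult_distr; lra.
Qed.

Lemma rpow_inv x a : 0 <= x -> a <> 0 -> rpow (rpow x a) (/ a) = x.
Proof.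
  intros Hx Ha. destruct (Req_dec x 0) as [-> |].
  - rewrite (rpow_le0 0 a), rpow_le0; lra.
  - rewrite (rpow_pos_eq x), rpow_pos_eq by (apply Rpower_pos || lra).
    rewrite Rpower_mult, Rinv_r by auto. apply Rpower_1; lra.
Qed.

Lemma rpow_lt_of_lt_root x a e :
  0 < a -> 0 <= x -> 0 < e -> x < rpow e (/ a) -> rpow x a < e.
Proof.
  intros Ha Hx He H.
  rewrite <- (rpow_inv e (/ a)), Rinv_inv by (lra || (apply Rinv_neq_0_compat; lra)).
  apply rpow_lt; auto.
Qed.

(* For p >= 1, x |-> x^p is Lipschitz on [0,B] with constant p B^(p-1)
   (mean value theorem away from 0, a direct estimate at 0). *)
Lemma rpow_lipschitz_ordered p B w v : 1 <= p -> 0 < B -> 0 <= w <= v -> v <= B ->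
  rpow v p - rpow w p <= p * Rpower B (p - 1) * (v - w).
Proof.
  intros Hp HB Hw Hv.
  assert (HmonB : forall c, 0 < c <= B -> Rpower c (p - 1) <= Rpower B (p - 1))
    by (intros; apply Rle_Rpower_l; lra).
  destruct (Req_dec w v) as [<- | Hne].
  { rewrite !Rminus_diag, Rmult_0_r; lra. }
  destruct (Req_dec w 0) as [-> | Hw0].
  - rewrite (rpow_le0 0), rpow_pos_eq by lra.
    assert (Hsplit : Rpower v p = Rpower v (p - 1) * v).
    { replace p with ((p - 1) + 1) at 1 by ring.
      rewrite Rpower_plus, Rpower_1 by lra; ring. }
    assert (Hv' : Rpower v (p - 1) <= Rpower B (p - 1)) by (apply HmonB; lra).
    pose proof (Rpower_pos v (p - 1)). pose proof (Rpower_pos B (p - 1)).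
    rewrite Hsplit, !Rminus_0_r.
    assert (Rpower v (p - 1) * v <= Rpower B (p - 1) * v) by (apply Rmult_le_compat_r; lra).
    assert (0 <= (p - 1) * (Rpower B (p - 1) * v)) by (apply Rmult_le_pos; nra).
    lra.
  - rewrite !rpow_pos_eq by lra.
    destruct (MVT_cor2 (fun x => Rpower x p) (fun x => p * Rpower x (p - 1)) w v)
      as [c [Hc1 Hc2]]; [lra | intros; apply derivable_pt_lim_power; lra |].
    rewrite Hc1. apply Rmult_le_compat_r; [lra |].
    apply Rmult_le_compat_l; [lra | apply HmonB; lra].
Qed.

Lemma rpow_lipschitz p B w v : 1 <= p -> 0 < B -> 0 <= w <= B -> 0 <= v <= B ->
  Rabs (rpow v p - rpow w p) <= p * Rpower B (p - 1) * Rabs (v - w).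
Proof.
  intros. destruct (Rle_dec w v).
  - assert (rpow w p <= rpow v p) by (apply rpow_le; lra).
    rewrite !Rabs_right by lra. apply rpow_lipschitz_ordered; lra.
  - assert (rpow v p <= rpow w p) by (apply rpow_le; lra).
    rewrite (Rabs_left1 (v - w)), Rabs_left1, !Ropp_minus_distr by lra.
    apply rpow_lipschitz_ordered; lra.
Qed.

Lemma rpow_continuous p L eps : 1 <= p -> 0 <= L -> 0 < eps ->
  exists del, 0 < del /\ forall y, 0 <= y -> Rabs (y - L) < del ->
    Rabs (rpow y p - rpow L p) < eps.
Proof.
  intros Hp HL He.
  set (C := p * Rpower (L + 1) (p - 1)).
  assert (HC : 0 < C) by (apply Rmult_lt_0_compat; [lra | apply Rpower_pos]).
  exists (Rmin 1 (eps / C)).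
  split; [apply Rmin_glb_lt; [lra | apply Rdiv_lt_0_compat; lra] |].
  intros y Hy Hdist.
  pose proof (Rmin_l 1 (eps / C)). pose proof (Rmin_r 1 (eps / C)).
  apply Rabs_def2 in Hdist as Hbounds.
  apply Rle_lt_trans with (C * Rabs (y - L)).
  - apply rpow_lipschitz; lra.
  - apply Rlt_le_trans with (C * (eps / C)); [apply Rmult_lt_compat_l; lra |].
    right; field; lra.
Qed.

Lemma convex_bound_near_1 (F : R -> ERbar) f0 f2 ft t :
  Gamma0 F -> F 0 = ER f0 -> F 2 = ER f2 -> F t = ER ft -> 0 <= t <= 2 ->
  ft <= (f0 + f2) * Rabs (t - 1).
Proof.
  intros [Hnn [Hconv [_ H1]]] E0 E2 Et Ht.
  pose proof (Hnn 0 ltac:(lra)) as P0. pose proof (Hnn 2 ltac:(lra)) as P2.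
  rewrite E0 in P0; rewrite E2 in P2; simpl in P0, P2.
  destruct (Rle_dec t 1).
  - pose proof (Hconv 0 1 (1 - t) ltac:(lra) ltac:(lra) ltac:(lra)) as H.
    replace ((1 - t) * 0 + (1 - (1 - t)) * 1) with t in H by ring.
    rewrite Et, E0, H1 in H; simpl in H.
    rewrite Rabs_left1 by lra. nra.
  - pose proof (Hconv 2 1 (t - 1) ltac:(lra) ltac:(lra) ltac:(lra)) as H.
    replace ((t - 1) * 2 + (1 - (t - 1)) * 1) with t in H by ring.
    rewrite Et, E2, H1 in H; simpl in H.
    rewrite Rabs_right by lra. nra.
Qed.

Lemma metric_reverse_triangle D z x y : is_metric_Rplus D ->
  0 <= z -> 0 <= x -> 0 <= y -> Rabs (D z x - D z y) <= D x y.
Proof.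
  intros [_ [_ [Hsym Htri]]] Hz Hx Hy. apply Rabs_le.
  pose proof (Htri z x y Hz Hx Hy). pose proof (Htri z y x Hz Hy Hx).
  rewrite (Hsym y x) in * by auto. lra.
Qed.

Section PowerOfPerspective.

Variable F : R -> ERbar.
Variable a : R.
Hypothesis HG : Gamma0s F.
Hypothesis Ha : 0 < a <= 1.
Hypothesis Hhat : forall x y, 0 <= x -> 0 <= y -> er_fin (hatF F x y).
Hypothesis HM : is_metric_Rplus (Dfun F a).

Let f x := er_val (F x).
Let D := Dfun F a.
Let P := rpow (f 0) a.

(* F is finite on [0,oo), because F(x) = hatF(x,1). *)
Lemma F_finite x : 0 <= x -> F x = ER (f x) /\ 0 <= f x.
Proof.
  intros Hx. pose proof (Hhat x 1 Hx ltac:(lra)) as H. unfold hatF in H.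
  destruct (Rlt_dec 0 1) as [_ |]; [| lra].
  rewrite Rdiv_1_r in H. unfold f.
  destruct HG as [[Hnn _] _]. specialize (Hnn x Hx).
  destruct (F x); simpl in *; [auto |].
  destruct (Req_EM_T 1 0); [lra | contradiction].
Qed.

Lemma D_pos x y : 0 <= x -> 0 < y -> D x y = rpow (y * f (x / y)) a.
Proof.
  intros Hx Hy. unfold D, Dfun, hatF. destruct (Rlt_dec 0 y); [| lra].
  assert (0 <= x / y) by (apply Rmult_le_pos; [lra | left; apply Rinv_0_lt_compat; lra]).
  now rewrite (proj1 (F_finite (x / y) H)).
Qed.

Lemma D_to_1 s : 0 <= s -> D s 1 = rpow (f s) a.
Proof. intros. rewrite D_pos, Rdiv_1_r, Rmult_1_l by lra. reflexivity. Qed.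

Lemma D_from_0 s : 0 <= s -> D 0 s = rpow s a * P.
Proof.
  intros Hs. destruct (Req_dec s 0) as [-> |].
  - destruct HM as [_ [Hsep _]].
    unfold D; rewrite (proj2 (Hsep 0 0 ltac:(lra) ltac:(lra)) eq_refl).
    rewrite (rpow_le0 0) by lra; ring.
  - rewrite D_pos, Rdiv_0_l by lra.
    apply rpow_mult; [lra | apply (F_finite 0); lra].
Qed.

(* P = D(0,1) is positive since 0 <> 1; hence f(0) > 0. *)
Lemma P_pos : 0 < P.
Proof.
  pose proof (D_from_0 1 ltac:(lra)) as H. rewrite rpow_1, Rmult_1_l in H.
  destruct HM as [_ [Hsep _]]. pose proof (rpow_ge0 (f 0) a).
  destruct (Req_dec P 0) as [HP0 |]; [| unfold P in *; lra].
  assert (0 = 1) by (apply (Hsep 0 1); [lra | lra | unfold D in H; lra]). lra.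
Qed.

Lemma f0_pos : 0 < f 0.
Proof.
  pose proof P_pos. unfold P in H.
  destruct (Rle_dec (f 0) 0) as [Hle |]; [rewrite rpow_le0 in H |]; lra.
Qed.

Lemma D_lower_bound x y : 0 <= x -> 0 <= y -> P * Rabs (rpow x a - rpow y a) <= D x y.
Proof.
  intros Hx Hy. pose proof (metric_reverse_triangle _ 0 x y HM ltac:(lra) Hx Hy) as H.
  fold D in H. rewrite !D_from_0 in H by auto.
  rewrite <- Rmult_minus_distr_r, Rabs_mult, (Rabs_pos_eq P) in H by (left; apply P_pos).
  lra.
Qed.

(* Near 0, D(x,0) = x^a P is small. *)
Lemma D_continuous_at_0 eps : 0 < eps ->
  exists del, 0 < del /\ forall x, 0 <= x -> Rabs (x - 0) < del -> D x 0 < eps.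
Proof.
  intros He. pose proof P_pos as HP.
  exists (rpow (eps / P) (/ a)). split; [apply rpow_gt0, Rdiv_lt_0_compat; lra |].
  intros x Hx Hdist. rewrite Rminus_0_r, Rabs_pos_eq in Hdist by lra.
  destruct HM as [_ [_ [Hsym _]]]. unfold D; rewrite Hsym by lra; fold D.
  rewrite D_from_0 by lra.
  apply (rpow_lt_of_lt_root x a (eps / P)) in Hdist; [| lra | lra | apply Rdiv_lt_0_compat; lra].
  apply Rmult_lt_compat_r with (r := P) in Hdist; [| lra].
  unfold Rdiv in Hdist. rewrite Rmult_assoc, Rinv_l, Rmult_1_r in Hdist by lra. lra.
Qed.

Lemma perspective_linear_bound l x : 0 < l -> 0 <= x -> Rabs (x - l) < l ->
  0 <= l * f (x / l) <= (f 0 + f 2) * Rabs (x - l).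
Proof.
  intros Hl Hx Hdist. set (t := x / l).
  assert (Hxt : x = l * t) by (unfold t; field; lra).
  assert (Ht : 0 <= t <= 2).
  { apply Rabs_def2 in Hdist. split.
    - apply Rmult_le_pos; [lra | left; apply Rinv_0_lt_compat; lra].
    - apply Rmult_le_reg_l with l; [lra | rewrite <- Hxt; lra]. }
  destruct (F_finite 0), (F_finite 2), (F_finite t); try lra.
  assert (Hft : f t <= (f 0 + f 2) * Rabs (t - 1))
    by (eapply convex_bound_near_1; eauto; apply HG).
  assert (Hdist_t : l * Rabs (t - 1) = Rabs (x - l)).
  { rewrite Hxt, <- (Rabs_pos_eq l) at 1 by lra. rewrite <- Rabs_mult. f_equal; ring. }
  split; [apply Rmult_le_pos; lra |].
  rewrite <- Hdist_t.
  apply Rle_trans with (l * ((f 0 + f 2) * Rabs (t - 1))); [apply Rmult_le_compat_l; lra |].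
  right; ring.
Qed.

Lemma D_continuous_at_pos l eps : 0 < l -> 0 < eps ->
  exists del, 0 < del /\ forall x, 0 <= x -> Rabs (x - l) < del -> D x l < eps.
Proof.
  intros Hl He. set (K := f 0 + f 2).
  assert (HK : 0 <= K)
    by (pose proof f0_pos; pose proof (proj2 (F_finite 2 ltac:(lra))); unfold K; lra).
  assert (Hroot : 0 < rpow eps (/ a)) by (apply rpow_gt0; lra).
  exists (Rmin l (rpow eps (/ a) / (K + 1))).
  split; [apply Rmin_glb_lt; [lra | apply Rdiv_lt_0_compat; lra] |].
  intros x Hx Hdist.
  pose proof (Rmin_l l (rpow eps (/ a) / (K + 1))).
  pose proof (Rmin_r l (rpow eps (/ a) / (K + 1))).
  destruct (perspective_linear_bound l x) as [Hnn Hbound]; try lra.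
  rewrite D_pos by lra. apply rpow_lt_of_lt_root; try lra.
  pose proof (Rabs_pos (x - l)).
  apply Rle_lt_trans with ((K + 1) * Rabs (x - l)); [fold K in Hbound; nra |].
  apply Rlt_le_trans with ((K + 1) * (rpow eps (/ a) / (K + 1))).
  - apply Rmult_lt_compat_l; lra.
  - right; field; lra.
Qed.

Lemma D_continuous_at l eps : 0 <= l -> 0 < eps ->
  exists del, 0 < del /\ forall x, 0 <= x -> Rabs (x - l) < del -> D x l < eps.
Proof.
  intros Hl He. destruct (Req_dec l 0) as [-> |].
  - exact (D_continuous_at_0 eps He).
  - apply D_continuous_at_pos; lra.
Qed.

Lemma F_lower_bound : exists c, 0 < c /\ forall s, 0 <= s -> s <> 1 ->
  er_lt (ER (c * rpow (Rabs (rpow s a - 1)) (/ a))) (F s).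
Proof.
  pose proof f0_pos. pose proof P_pos.
  exists (f 0 / 2). split; [lra |]. intros s Hs Hs1.
  destruct (F_finite s Hs) as [Es Hfs]. rewrite Es. simpl.
  set (q := Rabs (rpow s a - 1)).
  assert (Hq : 0 < q).
  { apply Rabs_pos_lt, Rminus_eq_contra. rewrite <- (rpow_1 a).
    destruct (Rtotal_order s 1) as [Hlt | [Heq | Hgt]];
      [apply Rlt_not_eq, rpow_lt | contradiction | apply Rgt_not_eq, rpow_lt]; lra. }
  pose proof (D_lower_bound s 1 Hs ltac:(lra)) as HL.
  rewrite rpow_1, D_to_1 in HL by lra. fold q in HL.
  assert (H2 : rpow (P * q) (/ a) <= rpow (rpow (f s) a) (/ a))
    by (apply rpow_le; [apply Rinv_0_lt_compat |]; lra).
  rewrite rpow_inv, rpow_mult in H2 by lra.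
  unfold P in H2. rewrite rpow_inv in H2 by lra.
  pose proof (rpow_gt0 q (/ a) Hq). nra.
Qed.

Lemma D_complete : complete_Rplus D.
Proof.
  intros u Hu Hcauchy. pose proof P_pos as HP.
  set (v n := rpow (u n) a).
  assert (Hv : Cauchy_crit v).
  { intros eps He. destruct (Hcauchy (eps * P)) as [N HN]; [nra |].
    exists N. intros n m Hn Hm. unfold Rdist, v.
    pose proof (D_lower_bound (u n) (u m) (Hu n) (Hu m)). specialize (HN n m Hn Hm).
    apply Rmult_lt_reg_l with P; [lra |]. fold D in HN. lra. }
  destruct (R_complete v Hv) as [L HL].
  assert (HL0 : 0 <= L).
  { destruct (Rle_dec 0 L); auto. destruct (HL (- L)) as [N HN]; [lra |].
    specialize (HN N (le_n N)). unfold Rdist, v in HN.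
    apply Rabs_def2 in HN. pose proof (rpow_ge0 (u N) a). lra. }
  assert (Hp : 1 <= / a) by (rewrite <- Rinv_1; apply Rinv_le_contravar; lra).
  exists (rpow L (/ a)). split; [apply rpow_ge0 |]. intros eps He.
  destruct (D_continuous_at (rpow L (/ a)) eps (rpow_ge0 _ _) He) as [del [Hdel HD]].
  destruct (rpow_continuous (/ a) L del Hp HL0 Hdel) as [del' [Hdel' Hpow]].
  destruct (HL del' Hdel') as [N HN].
  exists N. intros n Hn. apply HD; [apply Hu |].
  rewrite <- (rpow_inv (u n) a) by (apply Hu || lra).
  apply Hpow; [apply rpow_ge0 | apply HN; lia].
Qed.

End PowerOfPerspective.

Theorem mainTheorem6 (F : R -> ERbar) (a : R) :
  Gamma0s F -> 0 < a <= 1 ->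
  (forall x y, 0 <= x -> 0 <= y -> er_fin (hatF F x y)) ->
  is_metric_Rplus (Dfun F a) ->
  (exists c, 0 < c /\ forall s, 0 <= s -> s <> 1 ->
      er_lt (ER (c * rpow (Rabs (rpow s a - 1)) (/ a))) (F s)) /\
  complete_Rplus (Dfun F a).
Proof.
  intros HG Ha Hhat HM. split.
  - exact (F_lower_bound F a HG Ha Hhat HM).
  - exact (D_complete F a HG Ha Hhat HM).
Qed.
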